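(* Let $L,L'$ be finite simplicial complexes and $\varphi: L\to L'$ a bijective simplicial finite-fibration. Then $$\mathrm{scat}(\varphi)\le\mathrm{scat}(L)\le\mathrm{TC}(\varphi)\le\mathrm{TC}(L)\le\mathrm{scat}(L\times L).$$
   Context: Simplicial complexes are abstract and edge-path connected; $K\times K'$ is the categorical product (vertex set $\mathrm{VX}(K)\times\mathrm{VX}(K')$; a set of vertices is a simplex iff both projections are simplices). Simplicial maps $f,g: K\to K'$ are contiguous if $f(\sigma)\cup g(\sigma)$ is a simplex for every simplex $\sigma$; $f\sim g$ if joined by a finite chain of contiguous simplicial maps. $\mathrm{SD}(\varphi_1,\varphi_2)$ for simplicial maps $K\to K'$ is the least $k\ge0$ such that $K$ is a union of subcomplexes $K_0,\dots,K_k$ with $\varphi_1|_{K_j}\sim\varphi_2|_{K_j}$ for all $j$. With $p_1,p_2: L\times L\to L$ the projections, $\mathrm{TC}(L)=\mathrm{SD}(p_1,p_2)$. For a complex $K$, a vertex $v_0$ of $K$ and constant map $c_{v_0}: K\to K$: $\mathrm{scat}(K)=\mathrm{SD}(1_K,c_{v_0})$; for $\varphi: L\to L'$, $\mathrm{scat}(\varphi)=\mathrm{SD}(\varphi,\varphi\circ c_{v_0})$. $I_m$ is the complex with vertices $0,\dots,m$ and edges $\{i,i+1\}$; $\varphi$ is a simplicial finite-fibration if for every finite complex $N$, $m\ge1$, inclusion $i: N\times\{0\}\to N\times I_m$ and simplicial $g: N\times\{0\}\to L$, $G: N\times I_m\to L'$ with $\varphi\circ g=G\circ i$, there is simplicial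 $\widetilde G$ with $\widetilde G\circ i=g$, $\varphi\circ\widetilde G=G$. $\mathrm{TC}(\varphi)$ is the simplicial Schwarz genus of $\pi_\varphi: L^I\to L\times L'$, $\delta\mapsto(\delta(0),\varphi(\delta(1)))$, where $L^I$ is the simplicial path complex of $L$; the simplicial Schwarz genus of $p: E\to B$ is the least $k\ge0$ such that $B$ is a union of subcomplexes $B_0,\dots,B_k$ each admitting a simplicial $s: B_j\to E$ with $p\circ s$ the inclusion. *)

From Stdlib Require Import List Relations Classical ClassicalEpsilon
  FunctionalExtensionality PropExtensionality.

Definition vset (V : Type) := V -> Prop.
Definition subset {V} (t s : vset V) := forall x, t x -> s x.
Definition nonempty {V} (s : vset V) := exists x, s x.
Definition finite_set {V} (s : vset V) := exists l : list V, forall x, s x -> In x l.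
Definition single {V} (v : V) : vset V := fun x => x = v.
Definition pairset {V} (v w : V) : vset V := fun x => x = v \/ x = w.
Definition image {V W} (f : V -> W) (s : vset V) : vset W :=
  fun y => exists x, s x /\ f x = y.
Definition union {V} (s t : vset V) : vset V := fun x => s x \/ t x.

(* A complex is given by its vertex type and its set of simplices; every
   element of [vtx K] is a vertex (see [is_complex]). *)
Record SC := mkSC { vtx : Type; simp : vset vtx -> Prop }.

Definition is_complex (K : SC) : Prop :=
  (forall s, simp K s -> finite_set s) /\
  (forall s, simp K s -> nonempty s) /\
  (forall s t, simp K s -> subset t s -> nonempty t -> simp K t) /\
  (forall v : vtx K, simp K (single v)).

Definition finite_complex (K : SC) : Prop :=
  is_complex K /\ exists l : list (vtx K), forall v, In v l.

Definition edge_connected (K : SC) : Prop :=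
  forall v w : vtx K,
    clos_refl_trans (vtx K) (fun a b => simp K (pairset a b)) v w.

Definition simplicial {K K' : SC} (f : vtx K -> vtx K') : Prop :=
  forall s, simp K s -> simp K' (image f s).

(* categorical product *)
Definition prodSC (K K' : SC) : SC :=
  mkSC (vtx K * vtx K')
       (fun s => simp K (image fst s) /\ simp K' (image snd s)).

Definition is_subcomplex (K : SC) (S : vset (vtx K) -> Prop) : Prop :=
  (forall s, S s -> simp K s) /\
  (forall s t, S s -> subset t s -> nonempty t -> S t).

Definition simp_on {K : SC} (S : vset (vtx K) -> Prop) (K' : SC)
  (f : vtx K -> vtx K') : Prop :=
  forall s, S s -> simp K' (image f s).

Definition contig_on {K : SC} (S : vset (vtx K) -> Prop) (K' : SC)
  (f g : vtx K -> vtx K') : Prop :=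
  forall s, S s -> simp K' (union (image f s) (image g s)).

(* f|_S ~ g|_S : joined by a finite chain of contiguous simplicial maps S -> K'
   (values of the maps off the vertices of S are irrelevant) *)
Definition homot_on {K : SC} (S : vset (vtx K) -> Prop) (K' : SC)
  (f g : vtx K -> vtx K') : Prop :=
  clos_refl_trans (vtx K -> vtx K')
    (fun a b => simp_on S K' a /\ simp_on S K' b /\ contig_on S K' a b) f g.

(* the least natural number satisfying P (meaningful when one exists) *)
Definition least (P : nat -> Prop) : nat :=
  epsilon (inhabits 0) (fun n => P n /\ forall m, P m -> n <= m).

Definition covers (K : SC) (k : nat) (S : nat -> vset (vtx K) -> Prop) : Prop :=
  (forall j, j <= k -> is_subcomplex K (S j)) /\
  (forall s, simp K s -> exists j, j <= k /\ S j s).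

Definition SD {K K' : SC} (phi1 phi2 : vtx K -> vtx K') : nat :=
  least (fun k => exists S, covers K k S /\
            forall j, j <= k -> homot_on (S j) K' phi1 phi2).

Definition TC (L : SC) : nat :=
  @SD (prodSC L L) L fst snd.

Definition scat (K : SC) (v0 : vtx K) : nat :=
  @SD K K (fun v => v) (fun _ => v0).

Definition scat_map {L L' : SC} (phi : vtx L -> vtx L') (v0 : vtx L) : nat :=
  @SD L L' phi (fun _ => phi v0).

Definition Im (m : nat) : SC :=
  mkSC {i : nat | i <= m}
       (fun s => nonempty s /\
          exists i, forall x, s x -> proj1_sig x = i \/ proj1_sig x = S i).

Definition Im_zero (m : nat) : vtx (Im m) := exist _ 0 (le_0_n m).

(* inclusion N x {0} -> N x I_m  (here {0} = I_0) *)
Definition incl0 (N : SC) (m : nat) (x : vtx (prodSC N (Im 0))) :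
  vtx (prodSC N (Im m)) := (fst x, Im_zero m).

Definition finite_fibration {L L' : SC} (phi : vtx L -> vtx L') : Prop :=
  forall (N : SC), finite_complex N -> edge_connected N ->
  forall m : nat, 1 <= m ->
  forall (g : vtx (prodSC N (Im 0)) -> vtx L)
         (G : vtx (prodSC N (Im m)) -> vtx L'),
    simplicial g -> simplicial G ->
    (forall x, phi (g x) = G (incl0 N m x)) ->
    exists Gt : vtx (prodSC N (Im m)) -> vtx L,
      simplicial Gt /\
      (forall x, Gt (incl0 N m x) = g x) /\
      (forall y, phi (Gt y) = G y).

(* L^I is the direct limit of the exponential complexes L^{I_m} along the maps
   induced by I_{m+1} -> I_m, i |-> min(i, m).  A vertex is thus a simplicial
   path extended stationarily: a function gamma : nat -> L, eventually
   constant, with {gamma i, gamma (i+1)} a simplex for all i. *)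
Definition is_path (L : SC) (gamma : nat -> vtx L) : Prop :=
  (forall i, simp L (pairset (gamma i) (gamma (S i)))) /\
  (exists m, forall i, m <= i -> gamma i = gamma m).

Definition path (L : SC) := {gamma : nat -> vtx L | is_path L gamma}.

Definition pathSC (L : SC) : SC :=
  mkSC (path L)
       (fun s => finite_set s /\ nonempty s /\
          forall i, simp L (fun v => exists d, s d /\
                     (v = proj1_sig d i \/ v = proj1_sig d (S i)))).

Definition path_start {L : SC} (d : path L) : vtx L := proj1_sig d 0.

Definition path_end {L : SC} (d : path L) : vtx L :=
  proj1_sig d (proj1_sig (constructive_indefinite_description _
                            (proj2 (proj2_sig d)))).

Definition schwarz_genus {E B : SC} (p : vtx E -> vtx B) : nat :=
  least (fun k => exists Bs, covers B k Bs /\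
    forall j, j <= k -> exists s : vtx B -> vtx E,
      simp_on (Bs j) E s /\
      (forall v, Bs j (single v) -> p (s v) = v)).

Definition pi_phi {L L' : SC} (phi : vtx L -> vtx L') (d : vtx (pathSC L)) :
  vtx (prodSC L L') := (path_start d, phi (path_end d)).

Definition TC_map {L L' : SC} (phi : vtx L -> vtx L') : nat :=
  @schwarz_genus (pathSC L) (prodSC L L') (pi_phi phi).

From Stdlib Require Import List Relations Classical ClassicalEpsilon
  FunctionalExtensionality PropExtensionality Arith Lia.

(** All four inequalities already hold between the covers defining the
    invariants, so each is proved by turning a cover witnessing the larger
    invariant into one witnessing the smaller.  Postcomposing with [phi]
    (resp. with the projections of [L x L]) and using that any two constant
    maps into an edge-connected complex are homotopic gives the outer two.
    The middle two rest on the correspondence between chains of contiguous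
    maps [f ~ g] on a subcomplex and simplicial maps into the path complex
    with endpoints [f] and [g] (finiteness of [L] bounds the length of the
    paths uniformly), combined with pulling covers back along
    [x |-> (x, phi v1)] and [(x, y) |-> (x, phi^-1 y)]; the latter is
    simplicial because [phi] is a bijective finite-fibration.  Finally,
    stars of vertices cover a finite connected complex, so [scat (L x L)] is
    attained and each invariant in the chain is a genuine minimum. *)

Lemma least_spec (P : nat -> Prop) :
  (exists n, P n) -> P (least P) /\ forall m, P m -> least P <= m.
Proof.
  intros [n Hn]. unfold least. apply epsilon_spec. revert Hn.
  induction n as [n IH] using (well_founded_induction lt_wf). intros Hn.
  destruct (classic (exists m, m < n /\ P m)) as [[m [Hmn Hm]] | Hmin].
  - exact (IH m Hmn Hm).
  - exists n. split; [exact Hn |]. intros m Hm.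
    destruct (le_lt_dec n m) as [Hle | Hlt]; [exact Hle |].
    exfalso. apply Hmin. exists m. split; assumption.
Qed.

Lemma least_le_of_imp (P Q : nat -> Prop) :
  (exists n, P n) -> (forall n, P n -> Q n) -> least Q <= least P.
Proof.
  intros HP HPQ. destruct (least_spec P HP) as [HPl _].
  destruct (least_spec Q (ex_intro _ _ (HPQ _ HPl))) as [_ HQmin].
  exact (HQmin _ (HPQ _ HPl)).
Qed.

Lemma clos_rt_map {A B} (R : relation A) (R' : relation B) (F : A -> B) :
  (forall a b, R a b -> R' (F a) (F b)) ->
  forall x y, clos_refl_trans A R x y -> clos_refl_trans B R' (F x) (F y).
Proof.
  intros HR x y Hxy. induction Hxy.
  - apply rt_step, HR. assumption.
  - apply rt_refl.
  - eapply rt_trans; eassumption.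
Qed.

Lemma clos_rt_sym {A} (R : relation A) :
  (forall a b, R a b -> R b a) ->
  forall x y, clos_refl_trans A R x y -> clos_refl_trans A R y x.
Proof.
  intros HR x y Hxy. induction Hxy.
  - apply rt_step, HR. assumption.
  - apply rt_refl.
  - eapply rt_trans; eassumption.
Qed.

Lemma clos_rt_chain {A} (R : relation A) x y :
  clos_refl_trans A R x y ->
  exists n (a : nat -> A), a 0 = x /\ (forall i, n <= i -> a i = y) /\
    forall i, i < n -> R (a i) (a (S i)).
Proof.
  intros Hxy. apply clos_rt_rt1n in Hxy.
  induction Hxy as [x | x y z Hxy _ [n [a [Ha0 [Han Hstep]]]]].
  - exists 0, (fun _ => x). split; [reflexivity | split; intros; [reflexivity | lia]].
  - exists (S n), (fun i => match i with 0 => x | S i' => a i' end).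
    split; [reflexivity | split].
    + intros [| i] Hi; [lia | apply Han; lia].
    + intros [| i] Hi; [rewrite Ha0; exact Hxy | apply Hstep; lia].
Qed.

Lemma chain_clos_rt {A} (R : relation A) (a : nat -> A) n :
  (forall i, i < n -> R (a i) (a (S i))) -> clos_refl_trans A R (a 0) (a n).
Proof.
  induction n as [| n IH]; intros Hstep; [apply rt_refl |].
  apply rt_trans with (a n).
  - apply IH. intros i Hi. apply Hstep. lia.
  - apply rt_step, Hstep. lia.
Qed.

Lemma vset_ext {V} (s t : vset V) : (forall x, s x <-> t x) -> s = t.
Proof.
  intros H. apply functional_extensionality. intros x.
  apply propositional_extensionality, H.
Qed.

Lemma image_comp {U V W} (F : V -> W) (f : U -> V) (s : vset U) :
  image (fun x => F (f x)) s = image F (image f s).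
Proof.
  apply vset_ext. intros y. split.
  - intros [x [Hx <-]]. exists (f x). split; [exists x; auto | reflexivity].
  - intros [v [[x [Hx <-]] <-]]. exists x. auto.
Qed.

Lemma image_id {V} (s : vset V) : image (fun x => x) s = s.
Proof.
  apply vset_ext. intros y. split; [intros [x [Hx <-]]; exact Hx | intros Hy; exists y; auto].
Qed.

Lemma image_ext_on {V W} (f g : V -> W) (s : vset V) :
  (forall x, s x -> f x = g x) -> image f s = image g s.
Proof.
  intros Hfg. apply vset_ext. intros y.
  split; intros [x [Hx <-]]; exists x; split; auto. symmetry. auto.
Qed.

Lemma image_union {V W} (f : V -> W) (s t : vset V) :
  image f (union s t) = union (image f s) (image f t).
Proof.
  apply vset_ext. intros y. split.
  - intros [x [[Hx | Hx] <-]]; [left | right]; exists x; auto.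
  - intros [[x [Hx <-]] | [x [Hx <-]]]; exists x; split; auto; [left | right]; exact Hx.
Qed.

Lemma image_single {V W} (f : V -> W) (x : V) : image f (single x) = single (f x).
Proof.
  apply vset_ext. intros y. split.
  - intros [x' [Hx' <-]]. red in Hx'. subst x'. reflexivity.
  - intros Hy. exists x. split; [reflexivity | symmetry; exact Hy].
Qed.

Lemma image_pairset {V W} (f : V -> W) (v w : V) :
  image f (pairset v w) = pairset (f v) (f w).
Proof. exact (eq_trans (image_union f (single v) (single w))
                       (f_equal2 union (image_single f v) (image_single f w))). Qed.

Lemma image_const {V W} (c : W) (s : vset V) :
  nonempty s -> image (fun _ => c) s = single c.
Proof.
  intros [x Hx]. apply vset_ext. intros y.
  split; [intros [x' [_ <-]]; reflexivity | intros Hy; exists x; auto].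
Qed.

Lemma image_subset {V W} (f : V -> W) (s t : vset V) :
  subset t s -> subset (image f t) (image f s).
Proof. intros Hts y [x [Hx <-]]. exists x. auto. Qed.

Lemma image_nonempty {V W} (f : V -> W) (s : vset V) :
  nonempty s -> nonempty (image f s).
Proof. intros [x Hx]. exists (f x), x. auto. Qed.

Lemma image_nonempty_inv {V W} (f : V -> W) (s : vset V) :
  nonempty (image f s) -> nonempty s.
Proof. intros [y [x [Hx _]]]. exists x. exact Hx. Qed.

Lemma finite_image {V W} (f : V -> W) (s : vset V) :
  finite_set s -> finite_set (image f s).
Proof. intros [l Hl]. exists (map f l). intros y [x [Hx <-]]. apply in_map, Hl, Hx. Qed.

Lemma union_comm {V} (s t : vset V) : union s t = union t s.
Proof. apply vset_ext. intros x. unfold union. tauto. Qed.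

Lemma union_diag {V} (s : vset V) : union s s = s.
Proof. apply vset_ext. intros x. unfold union. tauto. Qed.

Lemma simp_face {K} (hK : is_complex K) s t :
  simp K s -> subset t s -> nonempty t -> simp K t.
Proof. destruct hK as (_ & _ & H & _). exact (H s t). Qed.

Lemma simp_nonempty {K} (hK : is_complex K) s : simp K s -> nonempty s.
Proof. destruct hK as (_ & H & _). exact (H s). Qed.

Lemma simp_finite {K} (hK : is_complex K) s : simp K s -> finite_set s.
Proof. destruct hK as (H & _). exact (H s). Qed.

Lemma simp_single {K} (hK : is_complex K) v : simp K (single v).
Proof. destruct hK as (_ & _ & _ & H). exact (H v). Qed.

Lemma subcomplex_nonempty {K} (hK : is_complex K) C :
  is_subcomplex K C -> forall s, C s -> nonempty s.
Proof. intros [HC _] s Hs. exact (simp_nonempty hK s (HC s Hs)). Qed.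

Lemma subcomplex_vertex {K} C :
  is_subcomplex K C -> forall s x, C s -> s x -> C (single x).
Proof.
  intros [_ Hface] s x Hs Hx. apply (Hface s _ Hs); [| exists x; reflexivity].
  intros y Hy. red in Hy. subst y. exact Hx.
Qed.

Lemma simplicial_id {K : SC} : @simplicial K K (fun x => x).
Proof. intros s Hs. rewrite image_id. exact Hs. Qed.

Lemma simplicial_const {K M : SC} (hK : is_complex K) (hM : is_complex M) (c : vtx M) :
  @simplicial K M (fun _ => c).
Proof.
  intros s Hs. rewrite image_const by exact (simp_nonempty hK s Hs). apply simp_single, hM.
Qed.

Lemma simplicial_comp {K M N : SC} (f : vtx K -> vtx M) (g : vtx M -> vtx N) :
  simplicial f -> simplicial g -> simplicial (fun x => g (f x)).
Proof. intros hf hg s Hs. rewrite image_comp. apply hg, hf, Hs. Qed.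

Lemma simplicial_fst {K M : SC} : @simplicial (prodSC K M) K fst.
Proof. intros s [H _]. exact H. Qed.

Lemma simplicial_snd {K M : SC} : @simplicial (prodSC K M) M snd.
Proof. intros s [_ H]. exact H. Qed.

Lemma simplicial_pair {N K M : SC} (f : vtx N -> vtx K) (g : vtx N -> vtx M) :
  simplicial f -> simplicial g -> @simplicial N (prodSC K M) (fun x => (f x, g x)).
Proof.
  intros hf hg s Hs. split; rewrite <- image_comp; [exact (hf s Hs) | exact (hg s Hs)].
Qed.

Lemma simplicial_edge_path {K M : SC} (F : vtx K -> vtx M) (hF : simplicial F) v w :
  clos_refl_trans (vtx K) (fun a b => simp K (pairset a b)) v w ->
  clos_refl_trans (vtx M) (fun a b => simp M (pairset a b)) (F v) (F w).
Proof.
  apply clos_rt_map. intros a b Hab. rewrite <- image_pairset. apply hF, Hab.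
Qed.

Lemma prod_complex {K M} (hK : is_complex K) (hM : is_complex M) :
  is_complex (prodSC K M).
Proof.
  split; [| split; [| split]].
  - intros s [H1 H2].
    destruct (simp_finite hK _ H1) as [l1 Hl1], (simp_finite hM _ H2) as [l2 Hl2].
    exists (list_prod l1 l2). intros [x y] Hxy.
    apply in_prod; [apply Hl1 | apply Hl2]; exists (x, y); auto.
  - intros s [H1 _]. exact (image_nonempty_inv fst s (simp_nonempty hK _ H1)).
  - intros s t [H1 H2] Hts Hne. split;
      [apply (simp_face hK _ _ H1) | apply (simp_face hM _ _ H2)];
      auto using image_subset, image_nonempty.
  - intros v. split; rewrite image_single; apply simp_single; assumption.
Qed.

Lemma prod_finite {K M} :
  finite_complex K -> finite_complex M -> finite_complex (prodSC K M).
Proof.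
  intros [hK [l Hl]] [hM [m Hm]]. split; [apply prod_complex; assumption |].
  exists (list_prod l m). intros [x y]. apply in_prod; auto.
Qed.

Lemma prod_connected {K M} (hK : is_complex K) (hM : is_complex M) :
  edge_connected K -> edge_connected M -> edge_connected (prodSC K M).
Proof.
  intros cK cM [a b] [a' b']. apply rt_trans with (a', b).
  - apply (@simplicial_edge_path K (prodSC K M) (fun x => (x, b))); [| apply cK].
    apply simplicial_pair; [apply simplicial_id | apply simplicial_const; assumption].
  - apply (@simplicial_edge_path M (prodSC K M) (fun y => (a', y))); [| apply cM].
    apply simplicial_pair; [apply simplicial_const; assumption | apply simplicial_id].
Qed.

Lemma homot_on_trans {K K'} C (f g h : vtx K -> vtx K') :
  homot_on C K' f g -> homot_on C K' g h -> homot_on C K' f h.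
Proof. apply rt_trans. Qed.

Lemma homot_on_sym {K K'} C (f g : vtx K -> vtx K') :
  homot_on C K' f g -> homot_on C K' g f.
Proof.
  apply clos_rt_sym. intros a b (Ha & Hb & Hab).
  split; [exact Hb | split; [exact Ha |]].
  intros s Hs. rewrite union_comm. exact (Hab s Hs).
Qed.

Lemma homot_on_simp_on {K K'} C (f g : vtx K -> vtx K') :
  homot_on C K' f g -> simp_on C K' f -> simp_on C K' g.
Proof. intros Hfg. induction Hfg as [a b (_ & Hb & _) | | ]; auto. Qed.

Lemma homot_on_postcomp {K M M'} C (F : vtx M -> vtx M') (hF : simplicial F)
  (f g : vtx K -> vtx M) :
  homot_on C M f g -> homot_on C M' (fun x => F (f x)) (fun x => F (g x)).
Proof.
  apply (clos_rt_map _ _ (fun h x => F (h x))). intros a b (Ha & Hb & Hab).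
  split; [| split]; intros s Hs.
  - rewrite image_comp. apply hF, Ha, Hs.
  - rewrite image_comp. apply hF, Hb, Hs.
  - rewrite (image_comp F a), (image_comp F b), <- image_union. apply hF, Hab, Hs.
Qed.

Lemma homot_on_const {K K'} (hK' : is_complex K') (cK' : edge_connected K') C
  (hC : forall s, C s -> nonempty s) (u w : vtx K') :
  homot_on C K' (fun _ : vtx K => u) (fun _ => w).
Proof.
  apply (clos_rt_map (fun a b => simp K' (pairset a b)) _ (fun c (_ : vtx K) => c));
    [| apply cK'].
  intros a b Hab.
  assert (Hc : forall c, simp_on C K' (fun _ : vtx K => c)).
  { intros c s Hs. rewrite image_const by exact (hC s Hs). apply simp_single, hK'. }
  split; [apply Hc | split; [apply Hc |]].
  intros s Hs. rewrite !(image_const _ s (hC s Hs)). exact Hab.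
Qed.

Lemma homot_on_of_eq_on {K K'} C (hC : forall s x, C s -> s x -> C (single x))
  (h h' : vtx K -> vtx K') :
  simp_on C K' h -> (forall x, C (single x) -> h x = h' x) -> homot_on C K' h h'.
Proof.
  intros Hh Heq.
  assert (Himg : forall s, C s -> image h' s = image h s).
  { intros s Hs. apply image_ext_on. intros x Hx. symmetry. exact (Heq x (hC s x Hs Hx)). }
  apply rt_step. split; [exact Hh | split]; intros s Hs.
  - rewrite (Himg s Hs). exact (Hh s Hs).
  - rewrite (Himg s Hs), union_diag. exact (Hh s Hs).
Qed.

(* A trivial chain [f ~ g] says nothing about [f'] and [g'], hence the
   hypothesis that [f] is simplicial on [C]. *)
Lemma homot_on_eq_on {K K'} C (hC : forall s x, C s -> s x -> C (single x))
  (f f' g g' : vtx K -> vtx K') :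
  (forall x, C (single x) -> f x = f' x) -> (forall x, C (single x) -> g x = g' x) ->
  simp_on C K' f -> homot_on C K' f g -> homot_on C K' f' g'.
Proof.
  intros Hff' Hgg' Hf Hfg.
  apply homot_on_trans with f; [apply homot_on_sym, homot_on_of_eq_on; assumption |].
  apply homot_on_trans with g; [exact Hfg |].
  apply homot_on_of_eq_on; [exact hC | exact (homot_on_simp_on C f g Hfg Hf) | exact Hgg'].
Qed.

Definition pullback {K M : SC} (F : vtx K -> vtx M) (C : vset (vtx M) -> Prop) :
  vset (vtx K) -> Prop := fun t => C (image F t).

Lemma simp_on_pullback {K M M'} (F : vtx K -> vtx M) C (h : vtx M -> vtx M') :
  simp_on C M' h -> simp_on (pullback F C) M' (fun x => h (F x)).
Proof. intros Hh t Ht. rewrite image_comp. exact (Hh _ Ht). Qed.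

Lemma homot_on_pullback {K M M'} (F : vtx K -> vtx M) C (f g : vtx M -> vtx M') :
  homot_on C M' f g -> homot_on (pullback F C) M' (fun x => f (F x)) (fun x => g (F x)).
Proof.
  apply (clos_rt_map _ _ (fun h x => h (F x))). intros a b (Ha & Hb & Hab).
  split; [| split]; try (apply simp_on_pullback; assumption).
  intros t Ht. rewrite (image_comp a F), (image_comp b F). exact (Hab _ Ht).
Qed.

Definition reflects_simplices {K M : SC} (F : vtx K -> vtx M) : Prop :=
  forall t, simp M (image F t) -> simp K t.

Lemma reflects_simplices_of_retraction {K M : SC} (F : vtx K -> vtx M) (R : vtx M -> vtx K) :
  simplicial R -> (forall x, R (F x) = x) -> reflects_simplices F.
Proof.
  intros hR HRF t Ht. replace t with (image (fun x => R (F x)) t).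
  - rewrite image_comp. exact (hR _ Ht).
  - rewrite (image_ext_on _ (fun x => x)) by auto. apply image_id.
Qed.

Lemma covers_pullback {K M : SC} (F : vtx K -> vtx M) (hF : simplicial F)
  (rF : reflects_simplices F) k C :
  covers M k C -> covers K k (fun j => pullback F (C j)).
Proof.
  intros [HC Hcov]. split.
  - intros j Hj. destruct (HC j Hj) as [Hsimp Hface]. split.
    + intros t Ht. apply rF, Hsimp, Ht.
    + intros t t' Ht Ht't Hne. apply (Hface _ _ Ht);
        [apply image_subset, Ht't | apply image_nonempty, Hne].
  - intros t Ht. exact (Hcov _ (hF _ Ht)).
Qed.

Definition homotopy_cover {K K' : SC} (f g : vtx K -> vtx K') (k : nat) : Prop :=
  exists C, covers K k C /\ forall j, j <= k -> homot_on (C j) K' f g.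

Definition section_cover {E B : SC} (p : vtx E -> vtx B) (k : nat) : Prop :=
  exists C, covers B k C /\
    forall j, j <= k -> exists s : vtx B -> vtx E,
      simp_on (C j) E s /\ forall v, C j (single v) -> p (s v) = v.

Lemma SD_least {K K'} (f g : vtx K -> vtx K') : SD f g = least (homotopy_cover f g).
Proof. reflexivity. Qed.

Lemma schwarz_genus_least {E B} (p : vtx E -> vtx B) :
  schwarz_genus p = least (section_cover p).
Proof. reflexivity. Qed.

Lemma homotopy_cover_weaken {K K' K''} (f g : vtx K -> vtx K') (f' g' : vtx K -> vtx K'') k :
  (forall C, is_subcomplex K C -> homot_on C K' f g -> homot_on C K'' f' g') ->
  homotopy_cover f g k -> homotopy_cover f' g' k.
Proof.
  intros H [C [HC Hh]]. exists C. split; [exact HC |].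
  intros j Hj. exact (H _ (proj1 HC j Hj) (Hh j Hj)).
Qed.

Definition star {K : SC} (v : vtx K) : vset (vtx K) -> Prop :=
  fun s => simp K s /\ simp K (union s (single v)).

Lemma star_subcomplex {K} (hK : is_complex K) (v : vtx K) : is_subcomplex K (star v).
Proof.
  split; [intros s [Hs _]; exact Hs |].
  intros s t [Hs Hsv] Hts Hne. split; [exact (simp_face hK _ _ Hs Hts Hne) |].
  apply (simp_face hK _ _ Hsv).
  - intros x [Hx | Hx]; [left; apply Hts, Hx | right; exact Hx].
  - destruct Hne as [x Hx]. exists x. left. exact Hx.
Qed.

Lemma homot_on_star {K} (hK : is_complex K) (v : vtx K) :
  homot_on (star v) K (fun x => x) (fun _ => v).
Proof.
  apply rt_step. split; [| split]; intros s [Hs Hsv].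
  - rewrite image_id. exact Hs.
  - rewrite image_const by exact (simp_nonempty hK _ Hs). apply simp_single, hK.
  - rewrite image_id, image_const by exact (simp_nonempty hK _ Hs). exact Hsv.
Qed.

Lemma homotopy_cover_scat {K} (hK : finite_complex K) (cK : edge_connected K) (w : vtx K) :
  exists k, homotopy_cover (fun v : vtx K => v) (fun _ => w) k.
Proof.
  destruct hK as [hK [l Hl]].
  exists (length l - 1), (fun j => star (nth j l w)). split; [split |].
  - intros j _. apply star_subcomplex, hK.
  - intros s Hs. destruct (simp_nonempty hK _ Hs) as [u Hu].
    destruct (In_nth l u w (Hl u)) as [j [Hj Hju]].
    exists j. split; [lia | split; [exact Hs |]]. rewrite Hju.
    apply (simp_face hK _ _ Hs); [| exists u; left; exact Hu].
    intros x [Hx | Hx]; [exact Hx | red in Hx; subst x; exact Hu].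
  - intros j _. apply homot_on_trans with (fun _ => nth j l w); [apply homot_on_star, hK |].
    apply homot_on_const; [exact hK | exact cK |].
    intros s [Hs _]. exact (simp_nonempty hK _ Hs).
Qed.

Definition path_layer {L : SC} (s : vset (vtx (pathSC L))) (i : nat) : vset (vtx L) :=
  fun v => exists d, s d /\ (v = proj1_sig d i \/ v = proj1_sig d (S i)).

Lemma simp_path_layer {L : SC} (s : vset (vtx (pathSC L))) :
  simp (pathSC L) s -> forall i, simp L (path_layer s i).
Proof. intros (_ & _ & H). exact H. Qed.

Lemma path_layer_image {K L : SC} (h : vtx K -> vtx (pathSC L)) (t : vset (vtx K)) i :
  path_layer (image h t) i =
  union (image (fun x => proj1_sig (h x) i) t) (image (fun x => proj1_sig (h x) (S i)) t).
Proof.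
  apply vset_ext. intros v. split.
  - intros [d [[x [Hx <-]] [-> | ->]]]; [left | right]; exists x; auto.
  - intros [[x [Hx <-]] | [x [Hx <-]]]; exists (h x);
      (split; [exists x; auto | auto]).
Qed.

Lemma const_path {L : SC} (hL : is_complex L) (v : vtx L) : is_path L (fun _ => v).
Proof.
  split; [| exists 0; reflexivity].
  intros i. change (simp L (union (single v) (single v))). rewrite union_diag.
  apply simp_single, hL.
Qed.

Lemma path_end_spec {L : SC} (d : path L) :
  exists m, forall i, m <= i -> proj1_sig d i = path_end d.
Proof.
  unfold path_end. destruct (constructive_indefinite_description _ _) as [m Hm].
  exists m. exact Hm.
Qed.

Lemma path_end_stationary {L : SC} (d : path L) n v :
  (forall i, n <= i -> proj1_sig d i = v) -> path_end d = v.
Proof.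
  intros Hn. destruct (path_end_spec d) as [m Hm].
  rewrite <- (Hm (max m n)) by lia. apply Hn. lia.
Qed.

Lemma paths_stationary_uniformly {L : SC} (l : list (path L)) :
  exists M, forall d, In d l -> forall i, M <= i -> proj1_sig d i = path_end d.
Proof.
  induction l as [| d0 l [M HM]]; [exists 0; intros d [] |].
  destruct (path_end_spec d0) as [m Hm]. exists (max m M).
  intros d [<- | Hd] i Hi; [apply Hm; lia | apply HM; [exact Hd | lia]].
Qed.

Lemma simp_on_path_eval {K L : SC} (hL : is_complex L) C (h : vtx K -> vtx (pathSC L)) i :
  simp_on C (pathSC L) h -> simp_on C L (fun x => proj1_sig (h x) i).
Proof.
  intros Hh t Ht. pose proof (Hh t Ht) as Hht.
  pose proof (simp_path_layer _ Hht i) as Hlayer. rewrite path_layer_image in Hlayer.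
  apply (simp_face hL _ _ Hlayer).
  - intros v Hv. left. exact Hv.
  - apply image_nonempty, (image_nonempty_inv h), (proj1 (proj2 Hht)).
Qed.

(* Finiteness of [K] is what makes the paths [h x] reach their ends after a
   common number of steps. *)
Lemma homot_on_of_path_map {K L : SC} (hL : is_complex L) (lK : list (vtx K))
  (hlK : forall x, In x lK) C (h : vtx K -> vtx (pathSC L)) :
  simp_on C (pathSC L) h ->
  homot_on C L (fun x => path_start (h x)) (fun x => path_end (h x)).
Proof.
  intros Hh. destruct (paths_stationary_uniformly (map h lK)) as [M HM].
  assert (Hend : (fun x => path_end (h x)) = (fun x => proj1_sig (h x) M)).
  { apply functional_extensionality. intros x. symmetry.
    apply HM; [apply in_map, hlK | lia]. }
  rewrite Hend.
  refine (chain_clos_rt _ (fun i x => proj1_sig (h x) i) M _).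
  intros i _. split; [| split]; try (apply simp_on_path_eval; assumption).
  intros t Ht. rewrite <- path_layer_image. exact (simp_path_layer _ (Hh t Ht) i).
Qed.

Lemma path_map_of_homot_on {K L : SC} (hK : is_complex K) (hL : is_complex L) C
  (hC : is_subcomplex K C) (f g : vtx K -> vtx L) :
  simp_on C L g -> homot_on C L f g ->
  exists h : vtx K -> vtx (pathSC L), simp_on C (pathSC L) h /\
    forall x, C (single x) -> path_start (h x) = f x /\ path_end (h x) = g x.
Proof.
  intros Hg Hfg. destruct (clos_rt_chain _ _ _ Hfg) as [n [a [Ha0 [Han Hstep]]]].
  assert (Hlayer : forall t, C t -> forall i, simp L (union (image (a i) t) (image (a (S i)) t))).
  { intros t Ht i. destruct (lt_dec i n) as [Hi | Hi].
    - apply (Hstep i Hi), Ht.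
    - rewrite !Han by lia. rewrite union_diag. apply Hg, Ht. }
  assert (Hpath : forall x, C (single x) -> is_path L (fun i => a i x)).
  { intros x Hx. split.
    - intros i. pose proof (Hlayer _ Hx i) as Hi. rewrite !image_single in Hi. exact Hi.
    - exists n. intros i Hi. rewrite !Han by lia. reflexivity. }
  pose (h := (fun x =>
          match excluded_middle_informative (C (single x)) with
          | left Hx => exist (is_path L) (fun i => a i x) (Hpath x Hx)
          | right _ => exist (is_path L) (fun _ => f x) (const_path hL (f x))
          end) : vtx K -> vtx (pathSC L)).
  assert (Hh : forall x, C (single x) -> forall i, proj1_sig (h x) i = a i x).
  { intros x Hx i. unfold h.
    destruct (excluded_middle_informative _); [reflexivity | contradiction]. }
  exists h. split.
  - intros t Ht. pose proof (proj1 hC t Ht) as Hsimp.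
    assert (Heval : forall i, image (fun x => proj1_sig (h x) i) t = image (a i) t).
    { intros i. apply image_ext_on. intros x Hx.
      exact (Hh x (subcomplex_vertex C hC t x Ht Hx) i). }
    split; [| split].
    + apply finite_image, (simp_finite hK), Hsimp.
    + apply image_nonempty, (simp_nonempty hK), Hsimp.
    + intros i. change (simp L (path_layer (image h t) i)).
      rewrite path_layer_image, !Heval. apply Hlayer, Ht.
  - intros x Hx. unfold path_start. rewrite (Hh x Hx), Ha0. split; [reflexivity |].
    apply path_end_stationary with n. intros i Hi. rewrite (Hh x Hx), (Han i Hi). reflexivity.
Qed.

(* The simplex [tau] with an edge from every vertex to [t0]: every element of
   [vtx K] must be a vertex, and the edges make the complex edge-connected. *)
Definition spokes {K : SC} (tau : vset (vtx K)) (t0 : vtx K) : SC :=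
  mkSC (vtx K) (fun s => nonempty s /\ (subset s tau \/ exists v, subset s (pairset v t0))).

Lemma spokes_finite {K : SC} (l : list (vtx K)) (hl : forall v, In v l)
  (tau : vset (vtx K)) (t0 : vtx K) :
  finite_set tau -> finite_complex (spokes tau t0).
Proof.
  intros [lt Hlt]. split; [split; [| split; [| split]] | exists l; exact hl].
  - intros s [_ [Hs | [v Hs]]].
    + exists lt. intros x Hx. apply Hlt, Hs, Hx.
    + exists (v :: t0 :: nil). intros x Hx. destruct (Hs x Hx) as [-> | ->]; simpl; auto.
  - intros s [Hne _]. exact Hne.
  - intros s t [_ [Hs | [v Hs]]] Hts Hne; split; auto; [left | right; exists v];
      intros x Hx; auto.
  - intros v. split; [exists v; reflexivity | right; exists v; intros x Hx; left; exact Hx].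
Qed.

Lemma spokes_connected {K : SC} (tau : vset (vtx K)) t0 : edge_connected (spokes tau t0).
Proof.
  intros v w. apply rt_trans with t0; apply rt_step; split.
  - exists v. left. reflexivity.
  - right. exists v. intros x Hx. exact Hx.
  - exists t0. left. reflexivity.
  - right. exists w. intros x [Hx | Hx]; [right | left]; exact Hx.
Qed.

Lemma prod_slice_simplex {N : SC} (hN : is_complex N) {m} (tau : vset (vtx N))
  (i : vtx (Im m)) :
  simp N tau -> simp (prodSC N (Im m)) (fun p => tau (fst p) /\ snd p = i).
Proof.
  intros Htau. destruct (simp_nonempty hN _ Htau) as [t0 Ht0].
  assert (Hfst : image fst (fun p : vtx (prodSC N (Im m)) => tau (fst p) /\ snd p = i) = tau).
  { apply vset_ext. intros x. split; [intros [p [[Hp _] <-]]; exact Hp |].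
    intros Hx. exists (x, i). split; [split; [exact Hx | reflexivity] | reflexivity]. }
  split; [rewrite Hfst; exact Htau | split].
  - exists i, (t0, i). split; [split; [exact Ht0 | reflexivity] | reflexivity].
  - exists (proj1_sig i). intros x [p [[_ Hp] <-]]. left. rewrite Hp. reflexivity.
Qed.

(* Lift the homotopy [N x I_1 -> L'] from the constant map at [t0] to the map
   fixing [tau] and collapsing the rest of [N = spokes tau t0] to [t0]; by
   injectivity of [phi] the lift sends [tau x {1}] onto [psi tau]. *)
Lemma finite_fibration_inverse_simplicial {L L'} (hL : is_complex L) (hL' : finite_complex L')
  (phi : vtx L -> vtx L') (psi : vtx L' -> vtx L) :
  finite_fibration phi -> (forall x y, phi x = phi y -> x = y) ->
  (forall y, phi (psi y) = y) -> simplicial psi.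
Proof.
  intros hfib hinj Hpsi tau Htau. destruct hL' as [cxL' [l Hl]].
  destruct (simp_nonempty cxL' _ Htau) as [t0 Ht0].
  pose (N := spokes tau t0).
  assert (fN : finite_complex N) by exact (spokes_finite l Hl tau t0 (simp_finite cxL' _ Htau)).
  pose (one := exist (fun i => i <= 1) 1 (le_n 1) : vtx (Im 1)).
  pose (G (p : vtx (prodSC N (Im 1))) :=
          if Nat.eqb (proj1_sig (snd p)) 0 then t0
          else if excluded_middle_informative (tau (fst p)) then fst p else t0).
  assert (HG : simplicial G).
  { intros s Hs. apply (simp_face cxL' _ _ Htau).
    - intros y [p [_ <-]]. unfold G.
      destruct (Nat.eqb _ 0); [exact Ht0 |].
      destruct (excluded_middle_informative _); assumption.
    - apply image_nonempty, (image_nonempty_inv fst), (simp_nonempty (proj1 fN)), (proj1 Hs). }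
  assert (Hg : simplicial (fun _ : vtx (prodSC N (Im 0)) => psi t0)).
  { intros s Hs. rewrite image_const; [apply simp_single, hL |].
    apply (image_nonempty_inv fst), (simp_nonempty (proj1 fN)), (proj1 Hs). }
  destruct (hfib N fN (spokes_connected tau t0) 1 (le_n 1) _ G Hg HG (fun _ => Hpsi t0))
    as [Gt [HGt [_ Hlift]]].
  pose (T (p : vtx (prodSC N (Im 1))) := tau (fst p) /\ snd p = one).
  assert (HT : simp (prodSC N (Im 1)) T).
  { apply (prod_slice_simplex (proj1 fN)).
    split; [exists t0; exact Ht0 | left; intros x Hx; exact Hx]. }
  assert (Hone : forall x, tau x -> Gt (x, one) = psi x).
  { intros x Hx. apply hinj. rewrite Hlift, Hpsi. unfold G. cbn.
    destruct (excluded_middle_informative (tau x)); [reflexivity | contradiction]. }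
  replace (image psi tau) with (image Gt T); [exact (HGt T HT) |].
  apply vset_ext. intros y. split.
  - intros [[x i] [[Hx Hi] <-]]. cbn in Hx, Hi. subst i.
    exists x. split; [exact Hx | symmetry; apply Hone, Hx].
  - intros [x [Hx <-]]. exists (x, one). split; [split; [exact Hx | reflexivity] |].
    apply Hone, Hx.
Qed.

Lemma scat_map_cover_of_scat_cover {L L'} (hL : is_complex L) (hL' : is_complex L')
  (cL' : edge_connected L') (phi : vtx L -> vtx L') (hphi : simplicial phi) (v0 v1 : vtx L) k :
  homotopy_cover (fun v => v) (fun _ => v1) k -> homotopy_cover phi (fun _ => phi v0) k.
Proof.
  apply homotopy_cover_weaken. intros C hC Hid.
  apply homot_on_trans with (fun _ => phi v1); [exact (homot_on_postcomp C phi hphi _ _ Hid) |].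
  apply homot_on_const; [exact hL' | exact cL' | exact (subcomplex_nonempty hL C hC)].
Qed.

Lemma scat_cover_of_section_cover {L L'} (hL : finite_complex L) (hL' : is_complex L')
  (phi : vtx L -> vtx L') (hinj : forall x y, phi x = phi y -> x = y) (v1 : vtx L) k :
  section_cover (pi_phi phi) k -> homotopy_cover (fun v => v) (fun _ => v1) k.
Proof.
  destruct hL as [cxL [l Hl]]. intros [B [HB Hsec]].
  pose (pr (x : vtx L) := (x, phi v1) : vtx (prodSC L L')).
  assert (hpr : simplicial pr).
  { apply simplicial_pair; [apply simplicial_id | apply simplicial_const; assumption]. }
  assert (rpr : reflects_simplices pr).
  { apply (reflects_simplices_of_retraction pr fst); [apply simplicial_fst | reflexivity]. }
  pose proof (covers_pullback pr hpr rpr k B HB) as HC.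
  exists (fun j => pullback pr (B j)). split; [exact HC |].
  intros j Hj. destruct (Hsec j Hj) as [s [Hs Hps]].
  assert (Hends : forall x, pullback pr (B j) (single x) ->
            path_start (s (pr x)) = x /\ path_end (s (pr x)) = v1).
  { intros x Hx. unfold pullback in Hx. rewrite image_single in Hx.
    assert (E : (path_start (s (pr x)), phi (path_end (s (pr x)))) = (x, phi v1))
      by exact (Hps _ Hx).
    injection E as E1 E2. split; [exact E1 | exact (hinj _ _ E2)]. }
  apply homot_on_eq_on with (fun x => path_start (s (pr x))) (fun x => path_end (s (pr x))).
  - exact (subcomplex_vertex _ (proj1 HC j Hj)).
  - intros x Hx. exact (proj1 (Hends x Hx)).
  - intros x Hx. exact (proj2 (Hends x Hx)).
  - apply (simp_on_path_eval cxL _ _ 0), simp_on_pullback, Hs.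
  - apply (homot_on_of_path_map cxL l Hl), simp_on_pullback, Hs.
Qed.

Lemma section_cover_of_TC_cover {L L'} (hL : is_complex L) (hL' : is_complex L')
  (phi : vtx L -> vtx L') (psi : vtx L' -> vtx L) (hphi : simplicial phi)
  (hpsi : simplicial psi) (Hpsi : forall y, phi (psi y) = y) k :
  @homotopy_cover (prodSC L L) L fst snd k -> section_cover (pi_phi phi) k.
Proof.
  intros [C [HC Hh]].
  pose (io (p : vtx (prodSC L L')) := (fst p, psi (snd p)) : vtx (prodSC L L)).
  assert (hio : simplicial io).
  { apply simplicial_pair; [apply simplicial_fst |].
    apply simplicial_comp; [apply simplicial_snd | exact hpsi]. }
  assert (rio : reflects_simplices io).
  { apply (reflects_simplices_of_retraction io (fun p => (fst p, phi (snd p)))).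
    - apply simplicial_pair; [apply simplicial_fst |].
      apply simplicial_comp; [apply simplicial_snd | exact hphi].
    - intros [x y]. cbn. rewrite Hpsi. reflexivity. }
  pose proof (covers_pullback io hio rio k C HC) as HB.
  exists (fun j => pullback io (C j)). split; [exact HB |].
  intros j Hj. pose proof (proj1 HB j Hj) as hBj.
  assert (Hg : simp_on (pullback io (C j)) L (fun p => psi (snd p))).
  { intros t Ht. apply (simplicial_comp _ _ simplicial_snd hpsi), (proj1 hBj), Ht. }
  destruct (path_map_of_homot_on (prod_complex hL hL') hL _ hBj (fun p => fst p)
              (fun p => psi (snd p)) Hg (homot_on_pullback io _ _ _ (Hh j Hj)))
    as [h [Hh_simp Hh_ends]].
  exists h. split; [exact Hh_simp |].
  intros [x y] Hv. destruct (Hh_ends _ Hv) as [Hstart Hend].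
  unfold pi_phi. rewrite Hstart, Hend. cbn. rewrite Hpsi. reflexivity.
Qed.

Lemma TC_cover_of_scat_cover {L} (hL : is_complex L) (cL : edge_connected L)
  (w0 : vtx (prodSC L L)) k :
  homotopy_cover (fun v => v) (fun _ => w0) k -> @homotopy_cover (prodSC L L) L fst snd k.
Proof.
  apply homotopy_cover_weaken. intros C hC Hid.
  pose proof (subcomplex_nonempty (prod_complex hL hL) C hC) as hne.
  apply homot_on_trans with (fun _ => fst w0);
    [exact (homot_on_postcomp (M := prodSC L L) (M' := L) C fst simplicial_fst _ _ Hid) |].
  apply homot_on_trans with (fun _ => snd w0); [apply homot_on_const; assumption |].
  apply homot_on_sym.
  exact (homot_on_postcomp (M := prodSC L L) (M' := L) C snd simplicial_snd _ _ Hid).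
Qed.

Theorem corollary6p5 (L L' : SC) (phi : vtx L -> vtx L')
  (hL : finite_complex L) (hL' : finite_complex L')
  (cL : edge_connected L) (cL' : edge_connected L')
  (hphi : simplicial phi)
  (hbij : (forall x y, phi x = phi y -> x = y) /\ (forall y, exists x, phi x = y))
  (hfib : finite_fibration phi)
  (v0 v1 : vtx L) (w0 : vtx (prodSC L L)) :
  scat_map phi v0 <= scat L v1 /\
  scat L v1 <= TC_map phi /\
  TC_map phi <= TC L /\
  TC L <= scat (prodSC L L) w0.
Proof.
  destruct hbij as [hinj hsurj].
  destruct (choice (fun y x => phi x = y) hsurj) as [psi Hpsi].
  pose proof (proj1 hL) as cxL. pose proof (proj1 hL') as cxL'.
  pose proof (finite_fibration_inverse_simplicial cxL hL' phi psi hfib hinj Hpsi) as hpsi.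
  destruct (homotopy_cover_scat (prod_finite hL hL) (prod_connected cxL cxL cL cL) w0)
    as [k H4].
  pose proof (TC_cover_of_scat_cover cxL cL w0 k H4) as H3.
  pose proof (section_cover_of_TC_cover cxL cxL' phi psi hphi hpsi Hpsi k H3) as H2.
  pose proof (scat_cover_of_section_cover hL cxL' phi hinj v1 k H2) as H1.
  unfold scat_map, scat, TC, TC_map. rewrite !SD_least, schwarz_genus_least.
  split; [| split; [| split]]; (apply least_le_of_imp; [eexists; eassumption | intros n Hn]).
  - exact (scat_map_cover_of_scat_cover cxL cxL' cL' phi hphi v0 v1 n Hn).
  - exact (scat_cover_of_section_cover hL cxL' phi hinj v1 n Hn).
  - exact (section_cover_of_TC_cover cxL cxL' phi psi hphi hpsi Hpsi n Hn).
  - exact (TC_cover_of_scat_cover cxL cL w0 n Hn).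
Qed.
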